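(* Let $(V_1, V_2)$ be an irreducible $3$-finite pair. Then there is a unique $\lambda \in (0,1)$ such that $\sigma(C(V_1, V_2)) \cap (0, 1) = \{\lambda\}$. Moreover, the restriction of $C(V_1,V_2)$ to $(\ker C(V_1, V_2))^\perp$ is unitarily equivalent to the diagonal matrix $\operatorname{diag}(1,\lambda,-\lambda)$ on $\mathbb{C}^3$.
   Context: All Hilbert spaces are complex and separable. An isometric pair is a pair $(V_1,V_2)$ of commuting isometries. An isometry $V$ is a shift if $V^{*m}\to0$ strongly. A BCL pair is an isometric pair with $V_1V_2$ a shift. $[V_2^*,V_1] := V_2^*V_1 - V_1V_2^*$. A compact normal pair is a BCL pair with $[V_2^*,V_1]$ compact and normal. $C(V_1,V_2) := I - V_1V_1^* - V_2V_2^* + V_1V_2V_1^*V_2^*$. A $3$-finite pair is a compact normal pair with $\operatorname{rank} C(V_1,V_2)=3$. Irreducible: no closed subspace other than $\{0\}$ and the whole space invariant under $V_1,V_2,V_1^*,V_2^*$. *)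

From HB Require Import structures.
From mathcomp Require Import all_boot all_order all_algebra.
From mathcomp Require Import reals.
From mathcomp Require Import complex.
Set Implicit Arguments. Unset Strict Implicit. Unset Printing Implicit Defensive.
Import Order.TTheory GRing.Theory Num.Theory.
Local Open Scope ring_scope.

Section Hilbert.
Variables (R : realType) (H : lmodType R[i]) (ip : H -> H -> R[i]).

Definition nsq (x : H) : R[i] := ip x x.

Definition cvgH (u : nat -> H) (x : H) : Prop :=
  forall eps : R[i], 0 < eps -> exists N : nat, forall n, (N <= n)%N -> nsq (u n - x) < eps.

Definition cauchyH (u : nat -> H) : Prop :=
  forall eps : R[i], 0 < eps -> exists N : nat,
    forall n m, (N <= n)%N -> (N <= m)%N -> nsq (u n - u m) < eps.

(* ip is an inner product (linear in the first variable) making H a complex  *)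
(* separable Hilbert space.                                                   *)
Definition hilbert_space : Prop :=
  [/\ forall (a : R[i]) (x y z : H), ip (a *: x + y) z = a * ip x z + ip y z,
      forall x y : H, ip y x = Num.conj (ip x y),
      forall x : H, 0 <= ip x x,
      forall x : H, ip x x = 0 -> x = 0
    & (forall u : nat -> H, cauchyH u -> exists x, cvgH u x) /\ exists d : nat -> H, forall (x : H) (eps : R[i]), 0 < eps ->
        exists n, nsq (x - d n) < eps].

Definition bounded_op (T : H -> H) : Prop :=
  (forall (a : R[i]) (x y : H), T (a *: x + y) = a *: T x + T y) /\
  exists M : R[i], forall x, nsq (T x) <= M * nsq x.

Definition is_adjoint (T S : H -> H) : Prop :=
  bounded_op T /\ bounded_op S /\ forall x y, ip (T x) y = ip x (S y).

Definition isometry (V Vs : H -> H) : Prop := is_adjoint V Vs /\ forall x, Vs (V x) = x.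

Definition shift (V Vs : H -> H) : Prop :=
  isometry V Vs /\ forall x, cvgH (fun m => iter m Vs x) 0.

Definition isometric_pair (V1 V1s V2 V2s : H -> H) : Prop :=
  [/\ isometry V1 V1s, isometry V2 V2s & forall x, V1 (V2 x) = V2 (V1 x)].

Definition BCL_pair (V1 V1s V2 V2s : H -> H) : Prop :=
  isometric_pair V1 V1s V2 V2s /\ shift (fun x => V1 (V2 x)) (fun x => V2s (V1s x)).

Definition compact_op (T : H -> H) : Prop :=
  bounded_op T /\
  forall u : nat -> H, (exists M : R[i], forall n, nsq (u n) <= M) ->
    exists (phi : nat -> nat) (y : H), (forall n, (phi n < phi n.+1)%N) /\
      cvgH (fun n => T (u (phi n))) y.

Definition normal_op (T Ts : H -> H) : Prop :=
  is_adjoint T Ts /\ forall x, T (Ts x) = Ts (T x).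

Definition commutator (V1 V1s V2 V2s : H -> H) : H -> H :=
  fun x => V2s (V1 x) - V1 (V2s x).
Definition commutator_adj (V1 V1s V2 V2s : H -> H) : H -> H :=
  fun x => V1s (V2 x) - V2 (V1s x).

Definition compact_normal_pair (V1 V1s V2 V2s : H -> H) : Prop :=
  [/\ BCL_pair V1 V1s V2 V2s,
      compact_op (commutator V1 V1s V2 V2s)
    & normal_op (commutator V1 V1s V2 V2s) (commutator_adj V1 V1s V2 V2s)].

Definition defect (V1 V1s V2 V2s : H -> H) : H -> H :=
  fun x => x - V1 (V1s x) - V2 (V2s x) + V1 (V2 (V1s (V2s x))).

Definition rank_eq (T : H -> H) (n : nat) : Prop :=
  exists b : 'I_n -> H,
    (forall c : 'I_n -> R[i], \sum_(i < n) c i *: b i = 0 -> forall i, c i = 0) /\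
    (forall y : H, (exists x, y = T x) <-> exists c : 'I_n -> R[i], y = \sum_(i < n) c i *: b i).

Definition three_finite_pair (V1 V1s V2 V2s : H -> H) : Prop :=
  compact_normal_pair V1 V1s V2 V2s /\ rank_eq (defect V1 V1s V2 V2s) 3.

Definition closed_subspace (M : H -> Prop) : Prop :=
  [/\ M 0, forall (a : R[i]) x y, M x -> M y -> M (a *: x + y)
    & forall (u : nat -> H) x, (forall n, M (u n)) -> cvgH u x -> M x].

Definition irreducible_pair (V1 V1s V2 V2s : H -> H) : Prop :=
  forall M : H -> Prop, closed_subspace M ->
    (forall x, M x -> [/\ M (V1 x), M (V2 x), M (V1s x) & M (V2s x)]) ->
    (forall x, M x -> x = 0) \/ (forall x, M x).

Definition spectrum (T : H -> H) (z : R[i]) : Prop :=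
  ~ exists S : H -> H, bounded_op S /\
      forall x, S (T x - z *: x) = x /\ T (S x) - z *: S x = x.

(* The restriction of T to (ker T)^perp is unitarily equivalent to           *)
(* diag(d 0, d 1, d 2) on C^3: there is a unitary U : C^3 -> (ker T)^perp,    *)
(* U c = \sum_i c i *: e i with e an orthonormal basis of (ker T)^perp, and   *)
(* T (U c) = U (diag d c), i.e. T (e i) = d i *: e i.                        *)
Definition restr_kerperp_unitarily_diag (T : H -> H) (d : 'I_3 -> R[i]) : Prop :=
  exists e : 'I_3 -> H,
    [/\ forall i j, ip (e i) (e j) = (i == j)%:R,
        forall y : H, (forall x, T x = 0 -> ip y x = 0) <->
                      exists c : 'I_3 -> R[i], y = \sum_(i < 3) c i *: e i
      & forall i, T (e i) = d i *: e i].

End Hilbert.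

Definition diag3 (R : realType) (a b c : R[i]) : 'I_3 -> R[i] :=
  fun i => if val i == 0%N then a else if val i == 1%N then b else c.

From HB Require Import structures.
From mathcomp Require Import all_boot all_order all_algebra.
From mathcomp Require Import reals complex spectral.
From mathcomp Require Import ring.
Set Implicit Arguments. Unset Strict Implicit. Unset Printing Implicit Defensive.
Import Order.TTheory GRing.Theory Num.Theory.
Local Open Scope ring_scope.
Local Open Scope sesquilinear_scope.

(* [C = C(V1, V2)] is self-adjoint of rank 3, so it is diagonal in an orthonormal basis
   [e 0], [e 1], [e 2] of its range, with nonzero eigenvalues [m k]; away from 0 its spectrum is
   [{m k}].  An eigenvector [e] for [mu != 0] satisfies [V2^* V1^* e = 0]; this makes [mu] real
   in [[-1, 1]], and makes [V1 V1^* e - V2 V2^* e] a nonzero eigenvector for [- mu] when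
   [mu <> 1, -1].  For [mu = -1], normality of [[V2^*, V1]] makes [V1^* e] an eigenvector for 1;
   and 1 is a simple eigenvalue, because two orthogonal eigenvectors for 1 would yield a vector
   [x0 <> 0] with [V1^* x0 = V2^* x0 = V2^* V1 x0 = 0], whose orbit under [V1], [V2] spans a
   proper reducing subspace.  In a three-dimensional range these injective pairings leave only
   the simple eigenvalues [1, lam, - lam] with [0 < lam < 1]. *)

Section LinearMaps.
Variables (R : realType) (H : lmodType R[i]) (f : H -> H).
Hypothesis f_lin : linear f.

Lemma lin0 : f 0 = 0.
Proof.
have := f_lin 1 0 0; rewrite scaler0 addr0 scale1r => h.
by apply: (addrI (f 0)); rewrite addr0 -h.
Qed.

Lemma linD x y : f (x + y) = f x + f y.
Proof. by rewrite -{1}[x]scale1r f_lin scale1r. Qed.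

Lemma linZ a x : f (a *: x) = a *: f x.
Proof. by rewrite -[a *: x]addr0 f_lin lin0 addr0. Qed.

Lemma linN x : f (- x) = - f x.
Proof. by rewrite -scaleN1r linZ scaleN1r. Qed.

Lemma linB x y : f (x - y) = f x - f y.
Proof. by rewrite linD linN. Qed.

Lemma lin_sum n (c : 'I_n -> R[i]) (g : 'I_n -> H) :
  f (\sum_(k < n) c k *: g k) = \sum_(k < n) c k *: f (g k).
Proof. by elim/big_rec2: _ => [|k s y _ <-]; rewrite ?lin0 ?f_lin. Qed.

Lemma lin_pair_to_line u0 u1 w c0 c1 : f u0 = c0 *: w -> f u1 = c1 *: w ->
  exists a b, ((a != 0) || (b != 0)) /\ f (a *: u0 + b *: u1) = 0.
Proof.
move=> fu0 fu1; have [c00|c0_neq0] := eqVneq c0 0.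
  by exists 1, 0; rewrite oner_neq0 scale0r addr0 scale1r fu0 c00 scale0r.
exists c1, (- c0); rewrite oppr_eq0 c0_neq0 orbT; split=> //.
by rewrite f_lin linZ fu0 fu1 !scalerA mulNr scaleNr mulrC subrr.
Qed.

End LinearMaps.

Lemma ord3_third (i j : 'I_3) : i != j -> exists k, (k != i) && (k != j).
Proof.
by case: i j => [[|[|[|?]]] ?] [[|[|[|?]]] ?] //= _;
  [exists (@Ordinal 3 2 isT) | exists (@Ordinal 3 1 isT) | exists (@Ordinal 3 2 isT)
  | exists ord0 | exists (@Ordinal 3 1 isT) | exists ord0].
Qed.

Lemma ord3_cover (i j k l : 'I_3) : i != j -> k != i -> k != j -> [|| l == i, l == j | l == k].
Proof.
by case: i j k l => [[|[|[|?]]] ?] [[|[|[|?]]] ?] [[|[|[|?]]] ?] [[|[|[|?]]] ?].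
Qed.

Definition ord3_enum (a b c : 'I_3) (t : 'I_3) :=
  if val t == 0%N then a else if val t == 1%N then b else c.

Lemma ord3_enum_inj (a b c : 'I_3) : a != b -> a != c -> b != c -> injective (ord3_enum a b c).
Proof.
move=> ab ac bc [[|[|[|?]]] ?] [[|[|[|?]]] ?] //= e_ab; apply: val_inj => //=;
  by move: e_ab ab ac bc; rewrite /ord3_enum /= => ->; rewrite eqxx /=.
Qed.

Section InnerProductSpace.
Variables (R : realType) (H : lmodType R[i]) (ip : H -> H -> R[i]).
Hypothesis ipL : forall (a : R[i]) (x y z : H), ip (a *: x + y) z = a * ip x z + ip y z.
Hypothesis ipC : forall x y : H, ip y x = (ip x y)^*.
Hypothesis ipP : forall x : H, 0 <= ip x x.
Hypothesis ipD : forall x : H, ip x x = 0 -> x = 0.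

Lemma ip0l y : ip 0 y = 0.
Proof.
have := ipL 1 0 0 y; rewrite scaler0 addr0 mul1r => h.
by apply: (addrI (ip 0 y)); rewrite addr0 -h.
Qed.

Lemma ipDl x y z : ip (x + y) z = ip x z + ip y z.
Proof. by rewrite -[x]scale1r ipL mul1r scale1r. Qed.

Lemma ipZl a x z : ip (a *: x) z = a * ip x z.
Proof. by rewrite -[a *: x]addr0 ipL ip0l addr0. Qed.

Lemma ipNl x z : ip (- x) z = - ip x z.
Proof. by rewrite -scaleN1r ipZl mulN1r. Qed.

Lemma ipBl x y z : ip (x - y) z = ip x z - ip y z.
Proof. by rewrite ipDl ipNl. Qed.

Lemma ip0r y : ip y 0 = 0.
Proof. by rewrite ipC ip0l conjC0. Qed.

Lemma ipDr x y z : ip z (x + y) = ip z x + ip z y.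
Proof. by rewrite ipC ipDl rmorphD /= -!ipC. Qed.

Lemma ipZr a x z : ip z (a *: x) = a^* * ip z x.
Proof. by rewrite ipC ipZl rmorphM /= -!ipC. Qed.

Lemma ipNr x z : ip z (- x) = - ip z x.
Proof. by rewrite ipC ipNl rmorphN /= -ipC. Qed.

Lemma ipBr x y z : ip z (x - y) = ip z x - ip z y.
Proof. by rewrite ipDr ipNr. Qed.

Lemma ip_suml n (c : 'I_n -> R[i]) (g : 'I_n -> H) z :
  ip (\sum_(k < n) c k *: g k) z = \sum_(k < n) c k * ip (g k) z.
Proof. by elim/big_rec2: _ => [|k s y _ <-]; rewrite ?ip0l // ipDl ipZl. Qed.

Lemma ip_sumr n (c : 'I_n -> R[i]) (g : 'I_n -> H) z :
  ip z (\sum_(k < n) c k *: g k) = \sum_(k < n) (c k)^* * ip z (g k).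
Proof. by elim/big_rec2: _ => [|k s y _ <-]; rewrite ?ip0r // ipDr ipZr. Qed.

Lemma ip_sym0 x y : ip x y = 0 -> ip y x = 0.
Proof. by move=> xy; rewrite ipC xy conjC0. Qed.

Lemma ipl_inj x y : (forall z, ip x z = ip y z) -> x = y.
Proof. by move=> xy; apply/eqP; rewrite -subr_eq0; apply/eqP/ipD; rewrite ipBl xy subrr. Qed.

Lemma ipxx_gt0 x : x != 0 -> 0 < ip x x.
Proof. by move=> x0; rewrite lt_def ipP andbT; apply: contra x0 => /eqP/ipD ->. Qed.

Lemma ipZZ a x : ip (a *: x) (a *: x) = a * a^* * ip x x.
Proof. by rewrite ipZl ipZr mulrA. Qed.

Lemma ip_cauchy_schwarz x y : ip x y * (ip x y)^* <= ip x x * ip y y.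
Proof.
have [->|y0] := eqVneq y 0; first by rewrite ip0r conjC0 mul0r ip0r mulr0.
have := ipP (ip y y *: x - ip x y *: y).
have -> : ip (ip y y *: x - ip x y *: y) (ip y y *: x - ip x y *: y) =
          ip y y * (ip x x * ip y y - ip x y * (ip x y)^*).
  by rewrite !(ipBl, ipBr, ipZl, ipZr) -ipC -(ipC x y); ring.
by rewrite pmulr_rge0 ?ipxx_gt0 // subr_ge0.
Qed.

Lemma cvgH_orth (u : nat -> H) x y :
  cvgH ip u x -> (forall n, ip (u n) y = 0) -> ip x y = 0.
Proof.
move=> ux uy; apply/eqP/negPn/negP => xy0.
set c := ip x y in xy0.
have c_gt0 : 0 < c * c^* by rewrite -normCK exprn_gt0 // normr_gt0.
have y_gt0 : 0 < ip y y + 1 by rewrite (le_lt_trans (ipP y)) // ltrDl.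
have [N /(_ N (leqnn N))] := ux _ (divr_gt0 c_gt0 y_gt0).
rewrite /nsq => uNx.
have := ip_cauchy_schwarz (u N - x) y.
rewrite ipBl uy sub0r rmorphN /= mulrNN -/c => cs.
have : c * c^* < c * c^*.
  apply: (le_lt_trans cs); apply: (le_lt_trans (y := c * c^* / (ip y y + 1) * ip y y)).
    by rewrite ler_wpM2r // ltW.
  by rewrite mulrAC ltr_pdivrMr // ltr_pM2l // ltrDl.
by rewrite ltxx.
Qed.

Lemma sum_delta_scale n (F : 'I_n -> H) k : \sum_(i < n) (i == k)%:R *: F i = F k.
Proof.
rewrite (bigD1 k) //= eqxx scale1r big1 ?addr0 // => i /negbTE ->.
by rewrite scale0r.
Qed.

Definition orthonormal n (e : 'I_n -> H) := forall i j, ip (e i) (e j) = (i == j)%:R.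

Definition in_span n (g : 'I_n -> H) v := exists c : 'I_n -> R[i], v = \sum_(k < n) c k *: g k.

Lemma in_span_lincomb n (g : 'I_n -> H) p (c : 'I_p -> R[i]) (f : 'I_p -> H) :
  (forall j, in_span g (f j)) -> in_span g (\sum_(j < p) c j *: f j).
Proof.
move=> fg; elim/big_rec: _ => [|j v _ [b ->]].
  by exists (fun=> 0); rewrite big1 // => k _; rewrite scale0r.
have [a ->] := fg j; exists (fun k => c j * a k + b k).
by rewrite scaler_sumr -big_split; apply: eq_bigr => k _; rewrite scalerDl scalerA.
Qed.

Lemma in_span_scale n (g : 'I_n -> H) a v : in_span g v -> in_span g (a *: v).
Proof.
move=> [c ->]; exists (fun k => a * c k).
by rewrite scaler_sumr; apply: eq_bigr => k _; rewrite scalerA.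
Qed.

Lemma in_span_gen n (g : 'I_n -> H) k : in_span g (g k).
Proof. by exists (fun i => (i == k)%:R); rewrite sum_delta_scale. Qed.

Section Orthonormal.
Variables (n : nat) (e : 'I_n -> H).
Hypothesis e_on : orthonormal e.

Lemma orthonormal_coord (c : 'I_n -> R[i]) j : ip (\sum_(k < n) c k *: e k) (e j) = c j.
Proof.
rewrite ip_suml (bigD1 j) //= e_on eqxx mulr1 big1 ?addr0 // => k /negbTE kj.
by rewrite e_on kj mulr0.
Qed.

Lemma orthonormal_expansion v : in_span e v -> v = \sum_(k < n) ip v (e k) *: e k.
Proof. by move=> [c ->]; apply: eq_bigr => k _; rewrite orthonormal_coord. Qed.

Lemma orthonormal_neq0 k : e k != 0.
Proof.
apply/eqP => ek0; have := e_on k k.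
by rewrite ek0 ip0l eqxx => /eqP; rewrite eq_sym oner_eq0.
Qed.

Lemma orthonormal_norm (c : 'I_n -> R[i]) :
  ip (\sum_(k < n) c k *: e k) (\sum_(k < n) c k *: e k) = \sum_(k < n) c k * (c k)^*.
Proof. by rewrite ip_sumr; apply: eq_bigr => k _; rewrite orthonormal_coord mulrC. Qed.

Lemma ip_coord_le v k : ip v (e k) * (ip v (e k))^* <= ip v v.
Proof. by have := ip_cauchy_schwarz v (e k); rewrite e_on eqxx mulr1. Qed.

Lemma orthonormal_pair_neq0 i j a b : i != j -> (a != 0) || (b != 0) ->
  a *: e i + b *: e j != 0.
Proof.
move=> ij; apply: contraTneq => v0; rewrite negb_or !negbK.
have coord k : ip (a *: e i + b *: e j) (e k) = a * (i == k)%:R + b * (j == k)%:R.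
  by rewrite ipDl !ipZl !e_on.
move: (coord i) (coord j); rewrite v0 !ip0l !eqxx (negbTE ij) eq_sym (negbTE ij).
by rewrite !mulr0 !mulr1 add0r addr0 => <- <-; rewrite eqxx.
Qed.

End Orthonormal.

Lemma eigenvector_spectrum (T : H -> H) v z : v != 0 -> T v = z *: v -> spectrum ip T z.
Proof.
move=> v0 Tv [S [[S_lin _] /(_ v) [+ _]]].
by rewrite Tv subrr lin0 // => v0'; rewrite -v0' eqxx in v0.
Qed.

Lemma ip_add_le u v : ip (u + v) (u + v) <= 2%:R * (ip u u + ip v v).
Proof.
have -> : 2%:R * (ip u u + ip v v) = ip (u + v) (u + v) + ip (u - v) (u - v).
  by rewrite !(ipDl, ipNl, ipDr, ipNr); ring.
by rewrite lerDl.
Qed.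

Definition recombine n (P : 'M[R[i]]_n) (g : 'I_n -> H) k := \sum_(j < n) (P k j)^* *: g j.

Lemma recombine_ip n (P : 'M[R[i]]_n) (g : 'I_n -> H) (phi : H -> H) k l :
  linear phi -> ip (phi (recombine P g k)) (recombine P g l) =
    \sum_(j < n) \sum_(j' < n) (P k j)^* * P l j' * ip (phi (g j)) (g j').
Proof.
move=> phi_lin; rewrite /recombine (lin_sum phi_lin) ip_suml; apply: eq_bigr => j _.
rewrite ip_sumr mulr_sumr; apply: eq_bigr => j' _; rewrite conjCK; ring.
Qed.

Lemma recombineK n (P : 'M[R[i]]_n) (g : 'I_n -> H) j :
  P \is unitarymx -> g j = \sum_(k < n) P k j *: recombine P g k.
Proof.
move=> uP; have PtP : P^t* *m P = 1%:M by rewrite -[P^t*]mul1mx mulmxKtV.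
rewrite /recombine; under eq_bigr do rewrite scaler_sumr.
rewrite exchange_big /= -[LHS]sum_delta_scale; apply: eq_bigr => i _.
under eq_bigr do rewrite scalerA.
rewrite -scaler_suml; congr (_ *: _).
have := congr1 (fun M : 'M[R[i]]_n => M i j) PtP; rewrite !mxE => <-.
by apply: eq_bigr => k _; rewrite !mxE mulrC.
Qed.

Lemma hermitian_diag n (g : 'I_n -> H) (phi : H -> H) : linear phi ->
  (forall i j, (ip (phi (g i)) (g j))^* = ip (phi (g j)) (g i)) ->
  exists (P : 'M[R[i]]_n) (d : 'I_n -> R[i]), P \is unitarymx /\
    forall k l, ip (phi (recombine P g k)) (recombine P g l) = (k == l)%:R * d k.
Proof.
move=> phi_lin g_herm.
pose G := \matrix_(j', j) ip (phi (g j)) (g j').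
have G_normal : G \is normalmx by apply/normalmxP; congr (_ *m _);
  apply/matrixP => j' j; rewrite !mxE g_herm.
have := orthomx_spectralP G_normal.
set P := spectralmx G; set d := spectral_diag G => G_diag.
have uP : P \is unitarymx := spectral_unitarymx G.
exists P, (fun k => d 0 k); split => // k l.
have : P *m G *m P^t* = diag_mx d.
  rewrite G_diag invmx_unitary // !mulmxA (unitarymxP uP) mul1mx.
  by rewrite -mulmxA (unitarymxP uP) mulmx1.
move=> /(congr1 (fun M : 'M[R[i]]_n => M l k)); rewrite !mxE => PGP.
have -> : (k == l)%:R * d 0 k = d 0 l *+ (l == k).
  by case: eqVneq => [->|_]; rewrite ?mul1r ?mul0r.
rewrite recombine_ip // -PGP; apply: eq_bigr => j _.
rewrite !mxE mulr_suml; apply: eq_bigr => j' _; rewrite !mxE; ring.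
Qed.

Lemma orthonormalize n (b : 'I_n -> H) :
  (forall c : 'I_n -> R[i], \sum_(k < n) c k *: b k = 0 -> forall k, c k = 0) ->
  exists f : 'I_n -> H, orthonormal f /\ forall v, in_span b v <-> in_span f v.
Proof.
move=> b_free.
(* Diagonalize the Gram matrix of [b], then normalize. *)
have [P [d [uP hd]]] :=
  @hermitian_diag n b id (fun _ _ _ => erefl) (fun i j => esym (ipC (b i) (b j))).
set h := recombine P b in hd.
have h_neq0 k : h k != 0.
  apply/eqP => hk0; have c0 := b_free (fun j => (P k j)^*) hk0.
  have := congr1 (fun M : 'M[R[i]]_n => M k k) (unitarymxP uP).
  rewrite !mxE eqxx big1 => [/eqP|j _]; first by rewrite eq_sym oner_eq0.
  by rewrite !mxE c0 mulr0.
have d_gt0 k : 0 < d k by have := hd k k; rewrite eqxx mul1r => <-; apply: ipxx_gt0.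
pose s k := sqrtC (d k).
have s_neq0 k : s k != 0 by rewrite gt_eqF // sqrtC_gt0.
have s_real k : (s k)^* = s k by rewrite conj_Creal // gtr0_real // sqrtC_gt0.
pose f k := (s k)^-1 *: h k.
exists f; split=> [k l|v].
  rewrite /f ipZl ipZr hd; case: eqVneq => [->|_]; last by rewrite mul0r !mulr0.
  by rewrite mul1r fmorphV /= s_real -[d l]sqrtCK expr2 -/(s l) mulr1n; field.
have bf j : in_span f (b j).
  rewrite (recombineK b j uP) -/h; apply: in_span_lincomb => k.
  by rewrite -[h k](scalerKV (s_neq0 k)); apply/in_span_scale/in_span_gen.
have fb k : in_span b (f k) by apply/in_span_scale/in_span_lincomb/in_span_gen.
by split=> [[c ->]|[c ->]]; apply: in_span_lincomb.
Qed.

Section SpectralDecomposition.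
Variable A : H -> H.
Hypothesis A_lin : linear A.
Hypothesis A_sa : forall x y, ip (A x) y = ip x (A y).

Definition spectral_decomposition n (e : 'I_n -> H) (m : 'I_n -> R[i]) :=
  [/\ orthonormal e, forall k, m k != 0
    & forall x, A x = \sum_(k < n) (m k * ip x (e k)) *: e k].

Section Decomposed.
Variables (n : nat) (e : 'I_n -> H) (m : 'I_n -> R[i]).
Hypothesis sd : spectral_decomposition e m.

Lemma sd_ip x k : ip (A x) (e k) = m k * ip x (e k).
Proof. by case: sd => e_on _ ->; rewrite orthonormal_coord. Qed.

Lemma sd_eigen k : A (e k) = m k *: e k.
Proof.
case: sd => e_on _ ->; rewrite (bigD1 k) //= e_on eqxx mulr1 big1 ?addr0 //.
by move=> j /negbTE jk; rewrite e_on eq_sym jk mulr0 scale0r.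
Qed.

Lemma sd_pair_eigen i j a b :
  m i = m j -> A (a *: e i + b *: e j) = m i *: (a *: e i + b *: e j).
Proof.
move=> mij; rewrite A_lin (linZ A_lin) !sd_eigen -mij.
by apply: ipl_inj => z; rewrite !(ipDl, ipZl); ring.
Qed.

Lemma sd_eigvec_coord v nu k : A v = nu *: v -> m k != nu -> ip v (e k) = 0.
Proof.
move=> Av mk; apply/eqP; have := sd_ip v k; rewrite Av ipZl => /eqP.
by rewrite -subr_eq0 -mulrBl mulf_eq0 subr_eq0 eq_sym (negbTE mk).
Qed.

Lemma sd_eigvec v nu : A v = nu *: v -> nu != 0 ->
  v = \sum_(k < n | m k == nu) ip v (e k) *: e k.
Proof.
move=> Av nu0; case: sd => _ _ Aexp.
apply: (scalerI nu0); rewrite -Av Aexp scaler_sumr [RHS]big_mkcond /=.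
apply: eq_bigr => k _; rewrite scalerA; case: eqP => [->//|/eqP mk].
by rewrite (sd_eigvec_coord Av) ?mulr0 ?scale0r // eq_sym.
Qed.

Lemma sd_eigvec_single v nu k : (forall l, m l = nu -> l = k) ->
  A v = nu *: v -> nu != 0 -> v = ip v (e k) *: e k.
Proof.
move=> mk Av nu0; rewrite {1}(sd_eigvec Av nu0) big_mkcond (bigD1 k) //= big1 ?addr0.
  by case: eqP => // /eqP mkn; rewrite (sd_eigvec_coord Av mkn) scale0r.
by move=> l lk; case: eqP => // /mk lk'; rewrite lk' eqxx in lk.
Qed.

Lemma sd_eigenvalue v nu : v != 0 -> A v = nu *: v -> nu != 0 -> exists k, m k = nu.
Proof.
move=> v0 Av nu0; have [/existsP[k /eqP mk]|/existsPn none] := boolP [exists k, m k == nu].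
  by exists k.
have sum0 : \sum_(k < n | m k == nu) ip v (e k) *: e k = 0.
  by rewrite big_pred0 // => k; apply/negbTE/none.
by rewrite (sd_eigvec Av nu0) sum0 eqxx in v0.
Qed.

Lemma sd_perm (s : 'I_n -> 'I_n) (d : 'I_n -> R[i]) :
  injective s -> (forall t, d t = m (s t)) -> spectral_decomposition (e \o s) d.
Proof.
move=> s_inj ds; case: sd => e_on m0 Aexp; split.
- by move=> i j; rewrite /= e_on (inj_eq s_inj).
- by move=> t; rewrite ds.
- by move=> x; rewrite Aexp (reindex_inj s_inj); apply: eq_bigr => t _; rewrite ds.
Qed.

Lemma sd_kerperp y : (forall x, A x = 0 -> ip y x = 0) <-> in_span e y.
Proof.
case: sd => e_on m0 Aexp; split => [yK|[c ->] x Ax0]; last first.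
  rewrite ip_suml big1 // => k _; apply/eqP; rewrite mulf_eq0; apply/orP; right.
  have := A_sa (e k) x; rewrite Ax0 ip0r sd_eigen ipZl => /eqP.
  by rewrite mulf_eq0 (negbTE (m0 k)).
set p := \sum_(k < n) ip y (e k) *: e k.
have rk k : ip (y - p) (e k) = 0 by rewrite ipBl /p (orthonormal_coord e_on) subrr.
have Ar : A (y - p) = 0 by rewrite Aexp big1 // => k _; rewrite rk mulr0 scale0r.
have pr : ip p (y - p) = 0.
  by rewrite ip_suml big1 // => k _; rewrite (ip_sym0 (rk k)) mulr0.
exists (fun k => ip y (e k)); apply/eqP; rewrite -subr_eq0; apply/eqP/ipD.
by rewrite {1}ipBl yK // pr subrr.
Qed.

Lemma sd_resolvent z : z != 0 -> (forall k, m k != z) -> ~ spectrum ip A z.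
Proof.
move=> z0 mz; case: sd => e_on _ Aexp; apply.
(* [A - z] acts as [m k - z] on [e k] and as [- z] on the kernel of [A]. *)
pose b k := m k / (z * (m k - z)).
pose S y := - z^-1 *: y + \sum_(k < n) (b k * ip y (e k)) *: e k.
have mz0 k : m k - z != 0 by rewrite subr_eq0.
have Sexp y : \sum_(k < n) (b k * ((m k - z) * ip y (e k))) *: e k = z^-1 *: A y.
  rewrite Aexp scaler_sumr; apply: eq_bigr => k _; rewrite scalerA /b; congr (_ *: _).
  by field; rewrite z0 mz0.
exists S; split; [split|] => [a x y|| x].
- rewrite /S; have -> : \sum_(k < n) (b k * ip (a *: x + y) (e k)) *: e k =
            a *: \sum_(k < n) (b k * ip x (e k)) *: e k + \sum_(k < n) (b k * ip y (e k)) *: e k.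
    rewrite scaler_sumr -big_split /=; apply: eq_bigr => k _.
    by rewrite ipL scalerA -scalerDl; congr (_ *: _); ring.
  by apply: ipl_inj => w; rewrite !(ipDl, ipZl); ring.
- exists (2%:R * ((- z^-1) * (- z^-1)^* + \sum_(k < n) b k * (b k)^*)) => y.
  apply: (le_trans (ip_add_le _ _)); rewrite /nsq -mulrA ler_pM2l ?ltr0n //.
  rewrite mulrDl ipZZ orthonormal_norm // mulr_suml lerD2l; apply: ler_sum => k _.
  rewrite rmorphM /= mulrACA ler_wpM2l ?mul_conjC_ge0 //.
  exact: ip_coord_le.
- split; rewrite /S.
    under eq_bigr do rewrite ipBl ipZl sd_ip -mulrBl.
    by rewrite Sexp; apply: ipl_inj => w; rewrite !(ipDl, ipZl, ipNl); field.
  rewrite (linD A_lin) (linZ A_lin) (lin_sum A_lin).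
  under eq_bigr do rewrite sd_eigen scalerA.
  have -> : \sum_(k < n) (b k * ip x (e k) * m k) *: e k =
            z *: \sum_(k < n) (b k * ip x (e k)) *: e k + z^-1 *: A x.
    rewrite -Sexp scaler_sumr -big_split /=; apply: eq_bigr => k _.
    by rewrite scalerA -scalerDl; congr (_ *: _); ring.
  by apply: ipl_inj => w; rewrite !(ipDl, ipZl, ipNl); field.
Qed.

Lemma sd_spectrum z : z != 0 -> spectrum ip A z <-> exists k, m k = z.
Proof.
move=> z0; split=> [Az|[k <-]]; last first.
  by case: sd => e_on _ _; apply: eigenvector_spectrum (orthonormal_neq0 e_on k) (sd_eigen k).
have [/existsP[k /eqP mk]|/existsPn mz] := boolP [exists k, m k == z]; first by exists k.
by case: (sd_resolvent z0 mz).
Qed.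

End Decomposed.

Lemma sd_restr_kerperp (e : 'I_3 -> H) (m : 'I_3 -> R[i]) :
  spectral_decomposition e m -> restr_kerperp_unitarily_diag ip A m.
Proof.
move=> sd; exists e; split; [by case: sd | exact: (sd_kerperp sd) | exact: (sd_eigen sd)].
Qed.

Lemma diag3_spectrum (e : 'I_3 -> H) l : spectral_decomposition e (diag3 1 l (- l)) ->
  0 < l < 1 -> forall z, spectrum ip A z /\ 0 < z < 1 <-> z = l.
Proof.
move=> sd /andP[l_gt0 l_lt1] z; split=> [[Az /andP[z_gt0 z_lt1]]|->]; last first.
  split; last by rewrite l_gt0 l_lt1.
  by apply/(sd_spectrum sd (lt0r_neq0 l_gt0)); exists (@Ordinal 3 1 isT).
have [t zt] := (sd_spectrum sd (lt0r_neq0 z_gt0)).1 Az.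
move: z_gt0 z_lt1; rewrite -zt /diag3; case: t {zt} => [[|[|[|t]]] t3] //=.
  by rewrite ltxx.
by rewrite oppr_gt0 => /(lt_trans l_gt0); rewrite ltxx.
Qed.

Lemma span_spectral_decomposition n (f : 'I_n -> H) : orthonormal f ->
  (forall y, (exists x, y = A x) <-> in_span f y) ->
  exists e m, spectral_decomposition (n := n) e m.
Proof.
move=> f_on range_f.
have [Q [d [uQ hd]]] :=
  @hermitian_diag n f A A_lin (fun i j => etrans (esym (ipC _ _)) (esym (A_sa _ _))).
set e := recombine Q f in hd.
have e_on : orthonormal e.
  move=> k l; rewrite (@recombine_ip n Q f id) //.
  have := congr1 (fun M : 'M[R[i]]_n => M l k) (unitarymxP uQ); rewrite !mxE eq_sym => <-.
  apply: eq_bigr => j _; rewrite (bigD1 j) //= f_on eqxx mulr1 big1 ?addr0.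
    by rewrite !mxE mulrC.
  by move=> j' /negbTE jj'; rewrite f_on eq_sym jj' mulr0.
have range_e y : (exists x, y = A x) -> in_span e y.
  move=> /range_f [c ->]; apply: in_span_lincomb => j.
  by rewrite (recombineK f j uQ); apply: in_span_lincomb => k; apply: in_span_gen.
have Ae k : A (e k) = d k *: e k.
  rewrite (orthonormal_expansion e_on (range_e _ (ex_intro _ _ erefl))).
  under eq_bigr do rewrite hd.
  rewrite (bigD1 k) //= eqxx mul1r big1 ?addr0 // => l /negbTE lk.
  by rewrite eq_sym lk mul0r scale0r.
have d_real k : (d k)^* = d k.
  by have := hd k k; rewrite eqxx mul1r => <-; rewrite -ipC A_sa.
exists e, d; split=> // [k|x].
  have [w ew] : exists w, e k = A w.
    by apply/range_f; apply: in_span_lincomb => j; apply: in_span_gen.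
  apply/eqP => dk0; have := e_on k k.
  by rewrite {1}ew A_sa Ae dk0 scale0r ip0r eqxx => /eqP; rewrite eq_sym oner_eq0.
rewrite {1}(orthonormal_expansion e_on (range_e _ (ex_intro _ _ erefl))).
by apply: eq_bigr => k _; rewrite A_sa Ae ipZr d_real.
Qed.

Lemma rank_spectral_decomposition n :
  rank_eq A n -> exists e m, spectral_decomposition (n := n) e m.
Proof.
move=> [b [b_free range_b]]; have [f [f_on span_bf]] := orthonormalize b_free.
apply: (span_spectral_decomposition f_on) => y.
by split=> [/range_b/span_bf | /span_bf/range_b].
Qed.

End SpectralDecomposition.

Section Isometry.
Variables V Vs : H -> H.
Hypothesis V_adj : forall x y, ip (V x) y = ip x (Vs y).
Hypothesis V_iso : forall x, Vs (V x) = x.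

Lemma adj_r x y : ip x (V y) = ip (Vs x) y.
Proof. by rewrite ipC V_adj -ipC. Qed.

Lemma isometry_ip x y : ip (V x) (V y) = ip x y.
Proof. by rewrite V_adj V_iso. Qed.

Lemma ip_range_complement x :
  ip (x - V (Vs x)) (x - V (Vs x)) = ip x x - ip (Vs x) (Vs x).
Proof. by rewrite !(ipBl, ipBr) isometry_ip V_adj adj_r; ring. Qed.

Lemma coisometry_contraction x : ip (Vs x) (Vs x) <= ip x x.
Proof. by rewrite -subr_ge0 -ip_range_complement. Qed.

Lemma coisometry_norm_eq x : ip (Vs x) (Vs x) = ip x x -> V (Vs x) = x.
Proof.
move=> Vsx; apply/eqP; rewrite eq_sym -subr_eq0; apply/eqP/ipD.
by rewrite ip_range_complement Vsx subrr.
Qed.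

End Isometry.

Section CommutingIsometries.
Variables V1 V1s V2 V2s : H -> H.
Hypotheses (V1_lin : linear V1) (V1s_lin : linear V1s).
Hypotheses (V2_lin : linear V2) (V2s_lin : linear V2s).
Hypothesis V1_adj : forall x y, ip (V1 x) y = ip x (V1s y).
Hypothesis V2_adj : forall x y, ip (V2 x) y = ip x (V2s y).
Hypothesis V1_iso : forall x, V1s (V1 x) = x.
Hypothesis V2_iso : forall x, V2s (V2 x) = x.
Hypothesis V12_comm : forall x, V1 (V2 x) = V2 (V1 x).

Local Notation C := (defect V1 V1s V2 V2s).

Lemma adjoint_comm x : V1s (V2s x) = V2s (V1s x).
Proof.
by apply: ipl_inj => y; rewrite -(adj_r V1_adj) -!(adj_r V2_adj) -(adj_r V1_adj) V12_comm.
Qed.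

Lemma defect_lin : linear C.
Proof.
move=> a x y; rewrite /defect.
rewrite !(linD V1s_lin, linZ V1s_lin, linD V2s_lin, linZ V2s_lin).
rewrite !(linD V1_lin, linZ V1_lin, linD V2_lin, linZ V2_lin).
by apply: ipl_inj => z; rewrite !(ipDl, ipNl, ipZl); ring.
Qed.

Lemma defect_sa x y : ip (C x) y = ip x (C y).
Proof.
rewrite /defect !(ipDl, ipNl, ipDr, ipNr) !V1_adj !V2_adj !(adj_r V1_adj) !(adj_r V2_adj).
by rewrite -!adjoint_comm -!(adj_r V1_adj) -!(adj_r V2_adj).
Qed.

Lemma defect_quad x : ip (C x) x =
  ip x x - ip (V1s x) (V1s x) - ip (V2s x) (V2s x) + ip (V1s (V2s x)) (V1s (V2s x)).
Proof. by rewrite /defect !(ipDl, ipNl) !V1_adj !V2_adj -!adjoint_comm. Qed.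

Lemma adjoint_defect x : V2s (V1s (C x)) = 0.
Proof.
rewrite /defect !(linD V1s_lin, linN V1s_lin) !V1_iso !(linD V2s_lin, linN V2s_lin).
by rewrite -!adjoint_comm !V2_iso subrr sub0r addrC subrr.
Qed.

Lemma defect_eigen_adjoint e mu : C e = mu *: e -> mu != 0 ->
  V2s (V1s e) = 0 /\ V1s (V2s e) = 0.
Proof.
move=> Ce mu0; have := adjoint_defect e.
rewrite Ce (linZ V1s_lin) (linZ V2s_lin) => /eqP; rewrite scaler_eq0 (negbTE mu0) /=.
by move=> /eqP Ve; rewrite adjoint_comm.
Qed.

Lemma defect_ker_adjoints e : V1s e = 0 -> V2s e = 0 -> C e = e.
Proof.
move=> V1e V2e; rewrite /defect V1e V2e (lin0 V1s_lin) (lin0 V2_lin) !(lin0 V1_lin).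
by rewrite !subr0 addr0.
Qed.

Lemma defect_eigen1_ker_adjoints e : C e = e -> V1s e = 0 /\ V2s e = 0.
Proof.
move=> Ce; have [_ V12e] : V2s (V1s e) = 0 /\ V1s (V2s e) = 0.
  by apply: defect_eigen_adjoint (oner_neq0 _); rewrite scale1r.
have := defect_quad e; rewrite Ce V12e ip0l addr0 -addrA -{1}[ip e e]addr0 => /addrI/eqP.
by rewrite eq_sym -opprD oppr_eq0 paddr_eq0 ?ipP // => /andP[/eqP/ipD -> /eqP/ipD ->].
Qed.

Lemma defect_eigen_bound e mu : C e = mu *: e -> e != 0 -> mu != 0 ->
  mu \is Num.real /\ -1 <= mu <= 1.
Proof.
move=> Ce e0 mu0; have [_ V12e] := defect_eigen_adjoint Ce mu0.
have e_gt0 := ipxx_gt0 e0.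
have mu_ip : mu * ip e e = ip e e - ip (V1s e) (V1s e) - ip (V2s e) (V2s e).
  by rewrite -ipZl -Ce defect_quad V12e ip0l addr0.
split.
  have : (mu * ip e e)^* = mu * ip e e by rewrite -ipZl -Ce -ipC defect_sa.
  rewrite rmorphM /= -ipC => /eqP; rewrite -subr_eq0 -mulrBl mulf_eq0 (gt_eqF e_gt0) orbF.
  by rewrite subr_eq0 => /eqP mu_real; apply/CrealP.
have V1e := coisometry_contraction V1_adj V1_iso e.
have V2e := coisometry_contraction V2_adj V2_iso e.
rewrite -(ler_pM2r e_gt0) -[X in _ && X](ler_pM2r e_gt0) mu_ip mulN1r mul1r.
rewrite -[X in X && _]subr_ge0 -[X in _ && X]subr_ge0; apply/andP; split.
  have -> : ip e e - ip (V1s e) (V1s e) - ip (V2s e) (V2s e) - - ip e e =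
            (ip e e - ip (V1s e) (V1s e)) + (ip e e - ip (V2s e) (V2s e)) by ring.
  by rewrite addr_ge0 // subr_ge0.
have -> : ip e e - (ip e e - ip (V1s e) (V1s e) - ip (V2s e) (V2s e)) =
          ip (V1s e) (V1s e) + ip (V2s e) (V2s e) by ring.
by rewrite addr_ge0.
Qed.

Definition defect_flip x := V1 (V1s x) - V2 (V2s x).

Lemma defect_flip_lin : linear defect_flip.
Proof.
move=> a x y; rewrite /defect_flip (V1s_lin a) (V2s_lin a) (V1_lin a) (V2_lin a).
by apply: ipl_inj => z; rewrite !(ipDl, ipNl, ipZl); ring.
Qed.

Lemma defect_eigen_split e mu : C e = mu *: e -> mu != 0 -> [/\
  e - V1 (V1s e) - V2 (V2s e) = mu *: e,
  C (V1 (V1s e)) = mu *: V2 (V2s e), C (V2 (V2s e)) = mu *: V1 (V1s e)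
  & V1 (V1s (V2 (V2s e))) = - mu *: V1 (V1s e)].
Proof.
move=> Ce mu0; have [V21e V12e] := defect_eigen_adjoint Ce mu0.
set a := V1 (V1s e); set b := V2 (V2s e).
have abe : e - a - b = mu *: e.
  by rewrite -Ce /defect V12e (lin0 V2_lin) (lin0 V1_lin) addr0.
have V2a : V2s a = - mu *: V2s e.
  have : V2s (e - a - b) = V2s (mu *: e) by rewrite abe.
  rewrite !(linB V2s_lin) (linZ V2s_lin) /b V2_iso addrAC subrr add0r => /eqP.
  by rewrite eqr_oppLR scaleNr => /eqP.
have V1b : V1s b = - mu *: V1s e.
  have : V1s (e - a - b) = V1s (mu *: e) by rewrite abe.
  rewrite !(linB V1s_lin) (linZ V1s_lin) /a V1_iso subrr add0r => /eqP.
  by rewrite eqr_oppLR scaleNr => /eqP.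
have V1V1b : V1 (V1s b) = - mu *: a by rewrite V1b (linZ V1_lin).
split=> //.
- rewrite /defect V2a (linZ V1s_lin) V12e scaler0 (lin0 V2_lin) (lin0 V1_lin) addr0.
  rewrite {2}/a V1_iso (linZ V2_lin) -/b.
  by apply: ipl_inj => z; rewrite !(ipDl, ipNl, ipZl); ring.
- rewrite /defect V1b adjoint_comm V1b (linZ V2s_lin) V21e scaler0 (lin0 V2_lin).
  rewrite (lin0 V1_lin) addr0 /b V2_iso (linZ V1_lin) -/a -/b.
  by apply: ipl_inj => z; rewrite !(ipDl, ipNl, ipZl); ring.
Qed.

Lemma defect_flip_eigen e mu : C e = mu *: e -> mu != 0 ->
  C (defect_flip e) = - mu *: defect_flip e.
Proof.
move=> Ce mu0; have [_ Ca Cb _] := defect_eigen_split Ce mu0.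
rewrite /defect_flip (linB defect_lin) Ca Cb.
by apply: ipl_inj => z; rewrite !(ipDl, ipNl, ipZl); ring.
Qed.

Lemma defect_flip_neq0 e mu : C e = mu *: e -> mu != 0 -> mu != 1 -> mu != -1 ->
  e != 0 -> defect_flip e != 0.
Proof.
move=> Ce mu0 mu1 muN1 e0; have [abe _ _ V1V1b] := defect_eigen_split Ce mu0.
apply: contra e0; rewrite /defect_flip subr_eq0 => /eqP ab.
have a0 : V1 (V1s e) = 0.
  have aa : - mu *: V1 (V1s e) = V1 (V1s e) by rewrite -V1V1b -ab V1_iso.
  have : (1 + mu) *: V1 (V1s e) = 0 by rewrite scalerDl scale1r -{1}aa scaleNr addNr.
  by move/eqP; rewrite scaler_eq0 addrC addr_eq0 (negbTE muN1) => /eqP.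
have : (1 - mu) *: e = 0.
  by rewrite scalerBl scale1r -abe -ab a0 !subr0 subrr.
by move/eqP; rewrite scaler_eq0 subr_eq0 eq_sym (negbTE mu1).
Qed.

Lemma defect_sd_opp n (e : 'I_n -> H) m i : spectral_decomposition C e m ->
  m i != 1 -> m i != -1 -> exists j, m j = - m i.
Proof.
move=> sd mi1 miN1; have [e_on m_neq0 _] := sd.
apply: (sd_eigenvalue sd _ (defect_flip_eigen (sd_eigen sd i) (m_neq0 i))).
  exact: defect_flip_neq0 (sd_eigen sd i) (m_neq0 i) mi1 miN1 (orthonormal_neq0 e_on i).
by rewrite oppr_eq0.
Qed.

Lemma V2s_V1_eq0 x : V2s x = 0 -> C (V1 x) = 0 -> V2s (V1 x) = 0.
Proof.
move=> V2x; rewrite /defect V1_iso adjoint_comm V1_iso V2x (lin0 V2_lin) (lin0 V1_lin).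
rewrite addr0 subrr sub0r => /eqP; rewrite oppr_eq0 => /eqP V2V2.
by rewrite -[V2s (V1 x)]V2_iso V2V2 (lin0 V2s_lin).
Qed.

Local Notation T := (commutator V1 V1s V2 V2s).
Local Notation Ts := (commutator_adj V1 V1s V2 V2s).

Lemma commutator_adjE x y : ip (T x) y = ip x (Ts y).
Proof.
rewrite /commutator /commutator_adj !(ipBl, ipBr) -(adj_r V2_adj) V1_adj.
by rewrite V1_adj -(adj_r V2_adj).
Qed.

Section NormalCommutator.
Hypothesis T_normal : forall x, T (Ts x) = Ts (T x).

Lemma commutator_norm x : ip (T x) (T x) = ip (Ts x) (Ts x).
Proof.
have adjr y z : ip y (T z) = ip (Ts y) z by rewrite ipC commutator_adjE -ipC.
by rewrite commutator_adjE -T_normal adjr.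
Qed.

Lemma commutator_eq0 x : T x = 0 -> Ts x = 0.
Proof. by move=> Tx; apply: ipD; rewrite -commutator_norm Tx ip0l. Qed.

Lemma commutator_adj_eq0 x : Ts x = 0 -> T x = 0.
Proof. by move=> Tx; apply: ipD; rewrite commutator_norm Tx ip0l. Qed.

Lemma defect_eigenN1 e : C e = - e -> V1 (V1s e) = e /\ C (V1s e) = V1s e.
Proof.
move=> Ce; have [V21e V12e] : V2s (V1s e) = 0 /\ V1s (V2s e) = 0.
  by apply: (@defect_eigen_adjoint _ (-1)); rewrite ?scaleN1r // oppr_eq0 oner_eq0.
have V1e := coisometry_contraction V1_adj V1_iso e.
have V2e := coisometry_contraction V2_adj V2_iso e.
have : (ip e e - ip (V1s e) (V1s e)) + (ip e e - ip (V2s e) (V2s e)) = 0.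
  have := defect_quad e; rewrite Ce ipNl V12e ip0l addr0 => q.
  by apply: (addrI (- ip e e)); rewrite addr0 [in RHS]q; ring.
move=> /eqP; rewrite paddr_eq0 ?subr_ge0 // !subr_eq0 => /andP[/eqP n1 /eqP n2].
have V1V1e := coisometry_norm_eq V1_adj V1_iso (esym n1).
split=> //; set y := V1s e.
have Ty : T y = V2s e by rewrite /commutator /y V1V1e V21e (lin0 V1_lin) subr0.
have Tsy : Ts y = V1s (V2 (y - V1 (V1s y))).
  by rewrite /commutator_adj (linB V2_lin) (linB V1s_lin) -V12_comm V1_iso.
(* By normality [|T^* y| = |T y| = |V2^* e| = |y|], while [|T^* y| <= |y - V1 V1^* y|]. *)
have Tsy_le : ip (Ts y) (Ts y) <= ip y y - ip (V1s y) (V1s y).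
  rewrite Tsy -(ip_range_complement V1_adj V1_iso) -(isometry_ip V2_adj V2_iso (y - _)).
  exact: coisometry_contraction.
have V1y : V1s y = 0.
  have Tsy_eq : ip (Ts y) (Ts y) = ip y y by rewrite -commutator_norm Ty -n2 n1.
  move: Tsy_le; rewrite Tsy_eq -subr_ge0 addrAC subrr sub0r oppr_ge0 => V1y_le0.
  by apply: ipD; apply/eqP; rewrite eq_le V1y_le0 ipP.
by apply: defect_ker_adjoints.
Qed.

Lemma orbit_ker_adjoints x0 : V1s x0 = 0 -> V2s x0 = 0 -> V2s (V1 x0) = 0 ->
  (forall b, V1s (iter b V2 x0) = 0) /\ (forall a, V2s (iter a V1 x0) = 0).
Proof.
move=> V1x0 V2x0 V21x0.
have Tx0 : T x0 = 0 by rewrite /commutator V21x0 V2x0 (lin0 V1_lin) subrr.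
have orbit2 b : V1s (iter b V2 x0) = 0 /\ T (iter b V2 x0) = 0.
  elim: b => [//|b [V1b Tb]] /=; have := commutator_eq0 Tb.
  rewrite /commutator_adj V1b (lin0 V2_lin) subr0 => V1b'; split=> //.
  by rewrite /commutator V12_comm !V2_iso subrr.
have orbit1 a : V2s (iter a V1 x0) = 0 /\ Ts (iter a V1 x0) = 0.
  elim: a => [|a [V2a Tsa]] /=; first by split=> //; apply: commutator_eq0.
  have := commutator_adj_eq0 Tsa.
  rewrite /commutator V2a (lin0 V1_lin) subr0 => V2a'; split=> //.
  by rewrite /commutator_adj -V12_comm !V1_iso subrr.
by split=> [b|a]; [case: (orbit2 b) | case: (orbit1 a)].
Qed.

Lemma iter_V2_V1 a x : V2 (iter a V1 x) = iter a V1 (V2 x).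
Proof. by elim: a => //= a IH; rewrite -V12_comm IH. Qed.

Lemma irreducible_ker_adjoints_orth x0 x1 : irreducible_pair ip V1 V1s V2 V2s ->
  V1s x0 = 0 -> V2s x0 = 0 -> V2s (V1 x0) = 0 -> V1s x1 = 0 -> V2s x1 = 0 ->
  ip x0 x1 = 0 -> x0 != 0 -> x1 = 0.
Proof.
move=> irr V1x0 V2x0 V21x0 V1x1 V2x1 x01 x0_neq0.
have [orbit2 orbit1] := orbit_ker_adjoints V1x0 V2x0 V21x0.
(* [M], the closed span of the [V1^a V2^b x0], reduces the pair and contains [x0], so it is
   all of [H]; but [x1] is orthogonal to it. *)
pose g a b := iter a V1 (iter b V2 x0).
pose M x := forall y, (forall a b, ip (g a b) y = 0) -> ip x y = 0.
have M_closed : closed_subspace ip M.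
  split=> [y _|c x y Mx My z gz|u x Mu ux y gy]; first by rewrite ip0l.
    by rewrite ipL Mx // My // mulr0 addr0.
  by apply: (cvgH_orth ux) => n; apply: Mu.
have M_red x : M x -> [/\ M (V1 x), M (V2 x), M (V1s x) & M (V2s x)].
  move=> Mx; split=> y gy.
  - by rewrite V1_adj; apply: Mx => a b; rewrite -V1_adj (gy a.+1 b).
  - by rewrite V2_adj; apply: Mx => a b; rewrite -V2_adj /g iter_V2_V1 (gy a b.+1).
  - rewrite -(adj_r V1_adj); apply: Mx => -[|a] b; rewrite (adj_r V1_adj) /g /=.
      by rewrite orbit2 ip0l.
    by rewrite V1_iso gy.
  - rewrite -(adj_r V2_adj); apply: Mx => a [|b]; rewrite (adj_r V2_adj) /g /=.
      by rewrite orbit1 ip0l.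
    by rewrite -iter_V2_V1 V2_iso gy.
have g_x1 a b : ip (g a b) x1 = 0.
  case: a => [|a] /=; last by rewrite V1_adj V1x1 ip0r.
  by case: b => [|b] //=; rewrite V2_adj V2x1 ip0r.
case: (irr M M_closed M_red) => [M0|MH].
  by rewrite (M0 x0 (fun y gy => gy 0%N 0%N)) eqxx in x0_neq0.
by apply: ipD; apply: MH.
Qed.

Lemma defect_sd_N1 n (e : 'I_n -> H) m i : spectral_decomposition C e m ->
  m i = -1 -> exists j, m j = 1.
Proof.
move=> sd miN1; have [e_on _ _] := sd.
have [V1V1e CV1e] : V1 (V1s (e i)) = e i /\ C (V1s (e i)) = V1s (e i).
  by apply: defect_eigenN1; rewrite (sd_eigen sd) miN1 scaleN1r.
apply: (sd_eigenvalue sd _ (etrans CV1e (esym (scale1r _))) (oner_neq0 _)).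
by apply: contra (orthonormal_neq0 e_on i) => /eqP V1e0; rewrite -V1V1e V1e0 (lin0 V1_lin).
Qed.

Section RankThree.
Variables (e : 'I_3 -> H) (m : 'I_3 -> R[i]).
Hypothesis sd : spectral_decomposition C e m.

Let e_on : orthonormal e. Proof. by case: sd. Qed.
Let m_neq0 k : m k != 0. Proof. by case: sd. Qed.

Lemma defect3_simple i j : i != j -> m i = m j -> m i != 1 -> m i != -1 -> False.
Proof.
move=> ij mij mi1 miN1; have [k mk] := defect_sd_opp sd mi1 miN1.
have mk_neq k' : m k' = m i -> k != k'.
  move=> mk'; apply/eqP => kk'; move: mk; rewrite kk' mk' => /eqP.
  by rewrite eq_sym eqNr (negbTE (m_neq0 i)).
have uniq_k l : m l = - m i -> l = k.
  move=> ml; have mi_opp : m i != - m i by rewrite eq_sym eqNr m_neq0.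
  case/or3P: (ord3_cover l ij (mk_neq i erefl) (mk_neq j (esym mij))) => /eqP li //.
    by rewrite li in ml; rewrite {1}ml eqxx in mi_opp.
  by rewrite li -mij in ml; rewrite {1}ml eqxx in mi_opp.
have flip_line l : m l = m i ->
    defect_flip (e l) = ip (defect_flip (e l)) (e k) *: e k.
  move=> ml; apply: (sd_eigvec_single sd uniq_k); last by rewrite oppr_eq0.
  by rewrite (defect_flip_eigen (sd_eigen sd l) (m_neq0 l)) ml.
have [a [b [ab0 flip0]]] :=
  lin_pair_to_line defect_flip_lin (flip_line i erefl) (flip_line j (esym mij)).
have := defect_flip_neq0 (sd_pair_eigen defect_lin sd a b mij) (m_neq0 i) mi1 miN1
  (orthonormal_pair_neq0 e_on ij ab0).
by rewrite flip0 eqxx.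
Qed.

Lemma defect3_simple_N1 i j : i != j -> m i = -1 -> m j = -1 -> False.
Proof.
move=> ij miN1 mjN1; have [k mk] := defect_sd_N1 sd miN1.
have N1_neq1 : (-1 : R[i]) != 1 by rewrite eqNr oner_eq0.
have mk_neq k' : m k' = -1 -> k != k'.
  by move=> mk'; apply/eqP => kk'; rewrite -kk' mk in mk'; rewrite -mk' eqxx in N1_neq1.
have uniq_k l : m l = 1 -> l = k.
  move=> ml; case/or3P: (ord3_cover l ij (mk_neq i miN1) (mk_neq j mjN1)) => /eqP li //.
    by rewrite li miN1 in ml; rewrite ml eqxx in N1_neq1.
  by rewrite li mjN1 in ml; rewrite ml eqxx in N1_neq1.
have V1s_line l : m l = -1 -> V1s (e l) = ip (V1s (e l)) (e k) *: e k.
  move=> ml; apply: (sd_eigvec_single sd uniq_k _ (oner_neq0 _)); rewrite scale1r.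
  by apply: (defect_eigenN1 _).2; rewrite (sd_eigen sd) ml scaleN1r.
have [a [b [ab0 V1s0]]] := lin_pair_to_line V1s_lin (V1s_line i miN1) (V1s_line j mjN1).
have V1V1v : V1 (V1s (a *: e i + b *: e j)) = a *: e i + b *: e j.
  by apply: (defect_eigenN1 _).1; rewrite (sd_pair_eigen defect_lin sd) ?miN1 ?mjN1 // scaleN1r.
have := orthonormal_pair_neq0 e_on ij ab0.
by rewrite -V1V1v V1s0 (lin0 V1_lin) eqxx.
Qed.

Lemma defect3_simple1 i j : irreducible_pair ip V1 V1s V2 V2s ->
  i != j -> m i = 1 -> m j = 1 -> False.
Proof.
move=> irr ij mi1 mj1; have [k /andP[ki kj]] := ord3_third ij.
have ker_adj l : m l = 1 -> V1s (e l) = 0 /\ V2s (e l) = 0.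
  by move=> ml; apply: defect_eigen1_ker_adjoints; rewrite (sd_eigen sd) ml scale1r.
have [[V1i V2i] [V1j V2j]] := (ker_adj i mi1, ker_adj j mj1).
(* Pick x0 in the span of [e i], [e j] with [V1 x0] orthogonal to [e k], hence to the range
   of [C]; then [V2^* V1 x0 = 0], and [x0] contradicts irreducibility. *)
pose phi x := ip (V1 x) (e k) *: e k.
have phi_lin : linear phi by move=> c x y; rewrite /phi V1_lin ipL scalerDl scalerA.
have [a [b [ab0 phi0]]] := lin_pair_to_line phi_lin (erefl (phi (e i))) (erefl (phi (e j))).
set x0 := a *: e i + b *: e j in phi0; set x1 := b^* *: e i + (- a^*) *: e j.
have x0_neq0 : x0 != 0 := orthonormal_pair_neq0 e_on ij ab0.
have x1_neq0 : x1 != 0.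
  by apply: (orthonormal_pair_neq0 e_on ij); rewrite oppr_eq0 !conjC_eq0 orbC.
have ker_pair (Vs : H -> H) : linear Vs -> Vs (e i) = 0 -> Vs (e j) = 0 ->
    forall c d, Vs (c *: e i + d *: e j) = 0.
  by move=> Vs_lin Vi Vj c d; rewrite Vs_lin (linZ Vs_lin) Vi Vj !scaler0 addr0.
have x01 : ip x0 x1 = 0.
  rewrite !(ipDl, ipDr, ipZl, ipZr) !e_on eqxx (negbTE ij) eq_sym (negbTE ij).
  by rewrite rmorphN /= !conjCK eqxx /=; ring.
have V1x0_perp l : ip (V1 x0) (e l) = 0.
  case/or3P: (ord3_cover l ij ki kj) => /eqP ->.
  - by rewrite V1_adj V1i ip0r.
  - by rewrite V1_adj V1j ip0r.
  by move/eqP: phi0; rewrite scaler_eq0 (negbTE (orthonormal_neq0 e_on k)) orbF => /eqP.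
have CV1x0 : C (V1 x0) = 0.
  by case: sd => _ _ ->; rewrite big1 // => l _; rewrite V1x0_perp mulr0 scale0r.
have := irreducible_ker_adjoints_orth irr
  (ker_pair V1s V1s_lin V1i V1j a b) (ker_pair V2s V2s_lin V2i V2j a b)
  (V2s_V1_eq0 (ker_pair V2s V2s_lin V2i V2j a b) CV1x0)
  (ker_pair V1s V1s_lin V1i V1j _ _) (ker_pair V2s V2s_lin V2i V2j _ _) x01 x0_neq0.
by move/eqP; rewrite (negbTE x1_neq0).
Qed.

Lemma defect3_eigen_inj : irreducible_pair ip V1 V1s V2 V2s -> injective m.
Proof.
move=> irr i j mij; apply/eqP/negPn/negP => ij.
have [mi1|mi1] := eqVneq (m i) 1; first by apply: (defect3_simple1 irr ij mi1); rewrite -mij.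
have [miN1|miN1] := eqVneq (m i) (-1); first by apply: (defect3_simple_N1 ij miN1); rewrite -mij.
exact: defect3_simple ij mij mi1 miN1.
Qed.

Lemma defect3_eigenvalues : irreducible_pair ip V1 V1s V2 V2s ->
  exists (s : 'I_3 -> 'I_3) (l : R[i]),
    [/\ injective s, 0 < l < 1 & forall t, diag3 1 l (- l) t = m (s t)].
Proof.
move=> irr; have m_inj := defect3_eigen_inj irr.
have m_neq t t' : t != t' -> m t != m t' by move=> tt'; apply: contra tt' => /eqP/m_inj ->.
have [/existsP[i /andP[mi1 miN1]]|/existsPn pm1] := boolP [exists i, (m i != 1) && (m i != -1)];
  last first.
  have pm t : (m t == 1) || (m t == -1) by move: (pm1 t); rewrite negb_and !negbK.
  pose o1 := @Ordinal 3 1 isT; pose o2 := @Ordinal 3 2 isT.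
  move: (m_neq ord0 o1 isT) (m_neq ord0 o2 isT) (m_neq o1 o2 isT).
  by case/orP: (pm ord0) => /eqP->; case/orP: (pm o1) => /eqP->; case/orP: (pm o2) => /eqP->;
    rewrite ?eqxx.
have [j mj] := defect_sd_opp sd mi1 miN1.
have mi_opp : m i != - m i by rewrite eq_sym eqNr m_neq0.
have ij : i != j by apply: contra mi_opp => /eqP ij; rewrite {1}ij mj eqxx.
have [k /andP[ki kj]] := ord3_third ij.
have mj1 : m j != 1 by rewrite mj eqr_oppLR.
have mjN1 : m j != -1 by rewrite mj eqr_opp.
have mk1 : m k = 1.
  have [//|mk1] := eqVneq (m k) 1.
  have [mkN1|mkN1] := eqVneq (m k) (-1).
    have [l ml] := defect_sd_N1 sd mkN1.
    by case/or3P: (ord3_cover l ij ki kj) => /eqP li; rewrite -ml li eqxx in mi1 mj1 mk1.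
  have [l ml] := defect_sd_opp sd mk1 mkN1.
  case/or3P: (ord3_cover l ij ki kj) => /eqP li; rewrite li in ml.
  - by move: (m_neq k j kj); rewrite mj ml opprK eqxx.
  - by move: (m_neq k i ki); rewrite -[m i]opprK -mj ml opprK eqxx.
  - by move: (m_neq0 k); rewrite -eqNr -ml eqxx.
have positive_pair p q : p != q -> k != p -> k != q -> 0 < m p -> m p != 1 -> m q = - m p ->
    exists (s : 'I_3 -> 'I_3) (l : R[i]),
      [/\ injective s, 0 < l < 1 & forall t, diag3 1 l (- l) t = m (s t)].
  move=> pq kp kq mp_gt0 mp1 mq; exists (ord3_enum k p q), (m p); split.
  - exact: ord3_enum_inj.
  - have [_ /andP[_ mp_le1]] :=
      defect_eigen_bound (sd_eigen sd p) (orthonormal_neq0 e_on p) (m_neq0 p).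
    by rewrite mp_gt0 lt_neqAle mp1.
  - by case=> [[|[|[|t]]] t3] //; rewrite /diag3 /ord3_enum /= ?mk1 ?mq.
have [mi_real _] := defect_eigen_bound (sd_eigen sd i) (orthonormal_neq0 e_on i) (m_neq0 i).
case: (real_ltgt0P mi_real) => [mi_gt0|mi_lt0|mi0]; last by move: (m_neq0 i); rewrite mi0 eqxx.
  exact: positive_pair ij ki kj mi_gt0 mi1 mj.
apply: (positive_pair j i) => //; first by rewrite eq_sym.
  by rewrite mj oppr_gt0.
by rewrite mj opprK.
Qed.

End RankThree.

Lemma irreducible_defect_rank3 : irreducible_pair ip V1 V1s V2 V2s -> rank_eq C 3 ->
  exists lam : R[i],
    [/\ 0 < lam < 1,
        (forall z : R[i], (spectrum ip C z /\ 0 < z < 1) <-> z = lam),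
        (forall mu : R[i], 0 < mu < 1 ->
           (forall z : R[i], (spectrum ip C z /\ 0 < z < 1) <-> z = mu) -> mu = lam)
      & restr_kerperp_unitarily_diag ip C (diag3 1 lam (- lam))].
Proof.
move=> irr rank3.
have [e [m sd]] := rank_spectral_decomposition defect_lin defect_sa rank3.
have [s [l [s_inj l01 ms]]] := defect3_eigenvalues sd irr.
have sd_diag := sd_perm sd s_inj ms.
have spec := diag3_spectrum defect_lin sd_diag l01.
exists l; split=> // [mu _ spec_mu|]; first by apply/spec/spec_mu.
exact: (sd_restr_kerperp defect_sa sd_diag).
Qed.

End NormalCommutator.

End CommutingIsometries.

End InnerProductSpace.

Theorem proposition4p5 (R : realType) (H : lmodType R[i]) (ip : H -> H -> R[i])
    (V1 V1s V2 V2s : H -> H) :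
  hilbert_space ip ->
  three_finite_pair ip V1 V1s V2 V2s ->
  irreducible_pair ip V1 V1s V2 V2s ->
  exists lam : R[i],
    [/\ 0 < lam < 1,
        (forall z : R[i], (spectrum ip (defect V1 V1s V2 V2s) z /\ 0 < z < 1) <-> z = lam),
        (forall mu : R[i], 0 < mu < 1 ->
           (forall z : R[i], (spectrum ip (defect V1 V1s V2 V2s) z /\ 0 < z < 1) <-> z = mu) ->
           mu = lam)
      & restr_kerperp_unitarily_diag ip (defect V1 V1s V2 V2s) (diag3 1 lam (- lam))].
Proof.
move=> [ipL ipC ipP ipD _] [[pair _ [_ T_normal]] rank3] irr.
have [[[[V1_lin _] [[V1s_lin _] V1_adj]] V1_iso]
      [[[V2_lin _] [[V2s_lin _] V2_adj]] V2_iso] V12_comm] := pair.1.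
exact: (irreducible_defect_rank3 ipL ipC ipP ipD V1_lin V1s_lin V2_lin V2s_lin V1_adj V2_adj
  V1_iso V2_iso V12_comm T_normal irr rank3).
Qed.
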